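(* Let $G$ be a $k$-regular graph with $n$ vertices, where $n\geq 4k$, and let $x$ be a vertex of $G$. Then $x$ is adjacent to at most $\binom{k}{2}(n-2k)+\binom{k}{3}$ cotriangles of $G$. Moreover, if this bound is attained, then the connected component of $G$ containing $x$ is isomorphic to $K_{k,k}$.
   Context: All graphs are finite and simple. A cotriangle in $G$ is an independent set of three vertices of $G$. A vertex $x$ of $G$ is adjacent to a cotriangle $T$ if $x$ is adjacent in $G$ to at least two vertices of $T$. $K_{k,k}$ is the complete bipartite graph with both parts of size $k$. *)

From mathcomp Require Import all_boot.
Set Implicit Arguments. Unset Strict Implicit. Unset Printing Implicit Defensive.

Definition simple_graph (T : finType) (e : rel T) : Prop :=
  symmetric e /\ irreflexive e.

Definition nbhd (T : finType) (e : rel T) (v : T) : {set T} := [set w | e v w].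

Definition regular (T : finType) (e : rel T) (k : nat) : Prop :=
  forall v : T, #|nbhd e v| = k.

Definition cotriangle (T : finType) (e : rel T) (S : {set T}) : bool :=
  (#|S| == 3) && [forall u in S, forall v in S, ~~ e u v].

Definition adj_cotriangle (T : finType) (e : rel T) (x : T) (S : {set T}) : bool :=
  2 <= #|S :&: nbhd e x|.

Definition num_adj_cotriangles (T : finType) (e : rel T) (x : T) : nat :=
  #|[set S : {set T} | cotriangle e S && adj_cotriangle e x S]|.

Definition component (T : finType) (e : rel T) (x : T) : {set T} :=
  [set y | connect e x y].

(* The subgraph induced on C is isomorphic to K_{k,k}: a bijection
   f : 'I_k + 'I_k -> C such that f a, f b are adjacent iff a, b lie on
   different sides. *)
Definition iso_Kkk (T : finType) (e : rel T) (C : {set T}) (k : nat) : Prop :=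
  exists f : 'I_k + 'I_k -> T,
    [/\ injective f,
        forall y, y \in C <-> exists a, f a = y &
        forall a b, e (f a) (f b) = (is_inl a != is_inl b)].

From mathcomp Require Import all_boot zify.

Set Implicit Arguments. Unset Strict Implicit. Unset Printing Implicit Defensive.

(* Let N be the neighbourhood of x.  An adjacent cotriangle either lies inside
   N (at most C(k,3) of them) or consists of two non-adjacent a, b in N and a
   vertex c outside N adjacent to neither.  Counting the ordered triples
   (a, b, c) by their first vertex a in N, with d = |N ∩ N(a)| there are at
   most k-1-d choices of b and n-2k+d choices of c, and for n >= 3k the
   product is at most (k-1)(n-2k), with equality only if d = 0 and every such
   pair (b, c) is non-adjacent.  In the extremal case N is therefore
   independent and all vertices of N have the same neighbourhood, which makes
   the component of x a copy of K_{k,k}. *)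

Lemma shifted_product_leqif (B C d k n : nat) :
  B + d + 1 = k -> C + 2 * k = n + d -> 3 * k <= n ->
  B * C <= (k - 1) * (n - 2 * k) ?= iff (d == 0).
Proof.
move=> Bk Cn kn; split; first by nia.
by apply/eqP/eqP; nia.
Qed.

Section Graph.

Variables (T : finType) (e : rel T).
Hypotheses (e_sym : symmetric e) (e_irr : irreflexive e).

Lemma mem_nbhd v w : (w \in nbhd e v) = e v w.
Proof. by rewrite inE. Qed.

Lemma card_cotriangles_sub (A : {set T}) :
  #|[set S : {set T} | cotriangle e S && (S \subset A)]| <= 'C(#|A|, 3).
Proof.
rewrite -cards_draws; apply: subset_leq_card; apply/subsetP => S.
by rewrite !inE => /andP[/andP[-> _] ->].
Qed.

Lemma iso_Kkk_complete_bipartite (k : nat) (U W : {set T}) :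
  #|U| = k -> #|W| = k ->
  {in U & W, forall u w, e u w} ->
  {in U &, forall u u', ~~ e u u'} -> {in W &, forall w w', ~~ e w w'} ->
  iso_Kkk e (U :|: W) k.
Proof.
move=> cU cW eUW indU indW.
have UW_disj y : y \in U -> y \in W -> False.
  by move=> yU yW; have := eUW y y yU yW; rewrite e_irr.
pose fU (i : 'I_k) := enum_val (cast_ord (esym cU) i).
pose fW (i : 'I_k) := enum_val (cast_ord (esym cW) i).
have fUP i : fU i \in U by apply: enum_valP.
have fWP i : fW i \in W by apply: enum_valP.
exists (fun s => match s with inl i => fU i | inr i => fW i end); split.
- move=> [i|i] [j|j] /=.
  + by move/enum_val_inj/cast_ord_inj ->.
  + by move=> fij; case: (UW_disj (fU i)); rewrite // fij.
  + by move=> fij; case: (UW_disj (fU j)); rewrite // -fij.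
  + by move/enum_val_inj/cast_ord_inj ->.
- move=> y; split => [|[[i|i] <-]]; rewrite ?in_setU ?fUP ?fWP ?orbT //.
  case/orP => [yU|yW].
    exists (inl (cast_ord cU (enum_rank_in yU y))).
    by rewrite /= /fU cast_ordK enum_rankK_in.
  exists (inr (cast_ord cW (enum_rank_in yW y))).
  by rewrite /= /fW cast_ordK enum_rankK_in.
- move=> [i|i] [j|j] /=.
  + exact/negbTE/indU.
  + exact: eUW.
  + by rewrite e_sym; apply: eUW.
  + exact/negbTE/indW.
Qed.

Variables (k : nat) (x : T).
Hypothesis e_reg : regular e k.

Local Notation N := (nbhd e x).

Lemma iso_Kkk_of_twin_nbhds :
  0 < k -> {in N &, forall a b, ~~ e a b} ->
  {in N &, forall a b, nbhd e a = nbhd e b} ->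
  iso_Kkk e (component e x) k.
Proof.
move=> k_gt0 indN twinN.
have [a0 a0N] : exists a0, a0 \in N by apply/card_gt0P; rewrite e_reg.
set W := nbhd e a0.
have xW : x \in W by rewrite mem_nbhd e_sym -mem_nbhd.
have nbhdN a : a \in N -> nbhd e a = W by move=> aN; apply: twinN.
have nbhdW w : w \in W -> nbhd e w = N.
  move=> wW; apply/esym/eqP; rewrite eqEcard !e_reg leqnn andbT.
  by apply/subsetP => a aN; rewrite mem_nbhd e_sym -mem_nbhd nbhdN.
have -> : component e x = N :|: W.
  have closedNW : closed e (mem (N :|: W)).
    have stepNW u v : e u v -> u \in N :|: W -> v \in N :|: W.
      move=> euv; rewrite !in_setU => /orP[uN|uW]; apply/orP.
        by right; rewrite -(nbhdN u uN) mem_nbhd.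
      by left; rewrite -(nbhdW u uW) mem_nbhd.
    by move=> u v euv; apply/idP/idP; apply: stepNW; rewrite // e_sym.
  apply/setP => y; rewrite inE; apply/idP/idP => [xy|].
    by rewrite -(closed_connect closedNW xy) in_setU xW orbT.
  rewrite in_setU => /orP[yN|yW]; first by apply: connect1; rewrite -mem_nbhd.
  by apply: (connect_trans (y := a0)); apply: connect1; rewrite -mem_nbhd.
apply: iso_Kkk_complete_bipartite => //; first exact: e_reg.
- by move=> u w uN; rewrite -(nbhdN u uN) mem_nbhd.
- move=> w w' wW w'W; apply/negP => eww'.
  have w'N : w' \in N by rewrite -(nbhdW w wW) mem_nbhd.
  by have := indN a0 w' a0N w'N; rewrite -mem_nbhd w'W.
Qed.

Definition adj_cotriangles : {set {set T}} :=
  [set S | cotriangle e S && adj_cotriangle e x S].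

(* An adjacent cotriangle not inside N, listed as (a, b, c) with a, b in N. *)
Definition split_cotriple (a b c : T) : bool :=
  [&& e x a, e x b, a != b, ~~ e x c & [&& ~~ e a b, ~~ e a c & ~~ e b c]].

Definition split_cotriples : {set T * (T * T)} :=
  [set t | split_cotriple t.1 t.2.1 t.2.2].

Definition split_cotriples_at (a : T) : {set T * T} :=
  [set p | split_cotriple a p.1 p.2].

Definition nonadj_in_nbhd (a : T) : {set T} := N :\ a :\: nbhd e a.

Definition nonadj_off_nbhd (a : T) : {set T} := ~: (N :|: nbhd e a).

Lemma split_cotripleC a b c : split_cotriple a b c = split_cotriple b a c.
Proof.
rewrite /split_cotriple [b == a]eq_sym [e b a]e_sym.
by case: (e x a) (e x b) (e a c) (e b c) => [] [] [] [].
Qed.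

Lemma split_cotriangleP S :
  S \in adj_cotriangles -> ~~ (S \subset N) ->
  exists a b c, split_cotriple a b c /\ S = [set a; b; c].
Proof.
rewrite inE => /andP[/andP[/eqP S3 indS] adjS] notSN.
have indep u v : u \in S -> v \in S -> ~~ e u v.
  by move=> uS vS; move/forall_inP: indS => /(_ u uS)/forall_inP/(_ v vS).
have SN_le : #|S :&: N| <= 3 by rewrite -S3 subset_leq_card ?subsetIl.
have SN_ne : #|S :&: N| != 3.
  apply: contra notSN => /eqP SN3; apply/setIidPl/eqP.
  by rewrite eqEcard subsetIl SN3 S3.
have /cards2P[a [b [ab SNab]]] : #|S :&: N| == 2.
  by move: adjS; rewrite /adj_cotriangle; lia.
have /cards1P[c SNc] : #|S :\: N| == 1.
  by have := cardsID N S; rewrite S3 SNab cards2 ab; lia.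
have : a \in S :&: N by rewrite SNab !inE eqxx.
have : b \in S :&: N by rewrite SNab !inE eqxx orbT.
have : c \in S :\: N by rewrite SNc inE.
rewrite !inE -!mem_nbhd => /andP[cN cS] /andP[bS bN] /andP[aS aN].
exists a, b, c; split; last by rewrite -(setID S N) SNab SNc.
by rewrite /split_cotriple -!(mem_nbhd x) aN bN ab cN !indep.
Qed.

Lemma double_card_split_cotriangles :
  #|adj_cotriangles :\: [set S : {set T} | S \subset N]| * 2 <= #|split_cotriples|.
Proof.
set A2 := _ :\: _; pose f (t : T * (T * T)) := [set t.1; t.2.1; t.2.2].
(* each cotriangle of A2 arises from both orders of its two vertices in N *)
have cover (Q : {set T * (T * T)}) :
    (forall a b c, a != b -> ((a, (b, c)) \in Q) || ((b, (a, c)) \in Q)) ->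
    #|A2| <= #|split_cotriples :&: Q|.
  move=> Qab; apply: leq_trans (leq_imset_card f _); apply: subset_leq_card.
  apply/subsetP => S; rewrite inE inE => /andP[notSN /split_cotriangleP].
  case/(_ notSN) => a [b [c [abc ->]]].
  have ab : a != b by case/and5P: abc.
  case/orP: (Qab a b c ab) => Qt.
    by apply/imsetP; exists (a, (b, c)); rewrite // !inE abc.
  apply/imsetP; exists (b, (a, c)); first by rewrite !inE -split_cotripleC abc.
  by apply/setP => y; rewrite !inE /= [(y == b) || _]orbC.
pose Rr := [set t : T * (T * T) | enum_rank t.1 < enum_rank t.2.1].
rewrite muln2 -addnn -(cardsID Rr) setDE leq_add //; apply: cover => a b c ab.
  rewrite !inE /= -neq_ltn; apply: contra ab => /eqP.
  by move/ord_inj/enum_rank_inj ->.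
by rewrite !inE /= -negb_and; apply/negP => /andP[/ltn_trans lt /lt]; rewrite ltnn.
Qed.

Lemma card_split_cotriples :
  #|split_cotriples| = \sum_(a in N) #|split_cotriples_at a|.
Proof.
rewrite -sum1_card.
transitivity (\sum_(a : T) \sum_(p : T * T | split_cotriple a p.1 p.2) 1).
  by rewrite pair_big_dep; apply: eq_bigl => -[a p]; rewrite inE.
rewrite (bigID (mem N)) /= [X in _ + X]big1 ?addn0 => [|a aN].
  by apply: eq_bigr => a _; rewrite -sum1_card; apply: eq_bigl => p; rewrite inE.
by rewrite big_pred0 // => p; rewrite /split_cotriple -mem_nbhd (negbTE aN).
Qed.

Lemma split_cotriples_at_sub a :
  split_cotriples_at a \subset setX (nonadj_in_nbhd a) (nonadj_off_nbhd a).
Proof.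
apply/subsetP => -[b c].
rewrite /nonadj_in_nbhd /nonadj_off_nbhd /nbhd !inE /split_cotriple /= negb_or.
by case/and5P => _ -> ab -> /and3P[-> -> _]; rewrite eq_sym ab.
Qed.

Lemma card_nonadj_in_nbhd a : a \in N ->
  #|nonadj_in_nbhd a| + #|N :&: nbhd e a| + 1 = k.
Proof.
move=> aN; have := cardsID (nbhd e a) (N :\ a).
have -> : (N :\ a) :&: nbhd e a = N :&: nbhd e a.
  by apply/setP => y; rewrite /nbhd !inE; case: eqP => [->|]; rewrite ?e_irr ?andbF.
by have := cardsD1 a N; rewrite aN e_reg /nonadj_in_nbhd; lia.
Qed.

Lemma card_nonadj_off_nbhd a :
  #|nonadj_off_nbhd a| + 2 * k = #|T| + #|N :&: nbhd e a|.
Proof.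
have := cardsC (N :|: nbhd e a); have := cardsUI N (nbhd e a).
by rewrite /nonadj_off_nbhd !e_reg; lia.
Qed.

Lemma card_split_cotriples_at_leqif : 3 * k <= #|T| ->
  {in N, forall a, #|split_cotriples_at a| <= (k - 1) * (#|T| - 2 * k)
    ?= iff (split_cotriples_at a == setX (nonadj_in_nbhd a) (nonadj_off_nbhd a))
           && (N :&: nbhd e a == set0)}.
Proof.
move=> kn a aN; rewrite -cards_eq0.
apply: leqif_trans (subset_leqif_cards (split_cotriples_at_sub a)) _.
rewrite cardsX; apply: shifted_product_leqif kn.
  exact: card_nonadj_in_nbhd.
exact: card_nonadj_off_nbhd.
Qed.

Lemma twin_nbhds_of_extremal :
  {in N, forall a, (split_cotriples_at a == setX (nonadj_in_nbhd a) (nonadj_off_nbhd a))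
                   && (N :&: nbhd e a == set0)} ->
  {in N &, forall a b, ~~ e a b} /\ {in N &, forall a b, nbhd e a = nbhd e b}.
Proof.
move=> extremal.
have {}extremal a : a \in N ->
    split_cotriples_at a = setX (nonadj_in_nbhd a) (nonadj_off_nbhd a)
    /\ N :&: nbhd e a = set0.
  by move=> aN; case/andP: (extremal a aN) => /eqP ? /eqP.
have indN : {in N &, forall a b, ~~ e a b}.
  move=> a b aN bN; apply/negP => eab.
  have : b \in N :&: nbhd e a by rewrite inE bN mem_nbhd.
  by rewrite (extremal a aN).2 inE.
split=> // a b aN bN; apply/eqP; rewrite eqEcard !e_reg leqnn andbT.
have [<-|ab] := eqVneq a b; first exact: subxx.
apply/subsetP => c; rewrite !mem_nbhd => eac; apply/negPn/negP => nbc.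
have cN : c \notin N by apply: contraL eac => cN; apply: indN.
have : (a, c) \in split_cotriples_at b.
  rewrite (extremal b bN).1 inE /nonadj_in_nbhd /nonadj_off_nbhd !inE /=.
  by rewrite -!(mem_nbhd x) aN (negbTE cN) ab (negbTE nbc) indN.
by rewrite inE /split_cotriple /= eac !andbF.
Qed.

End Graph.

Theorem mainTheorem5 (T : finType) (e : rel T) (k : nat) (x : T) :
  simple_graph e -> 1 <= k -> regular e k -> 4 * k <= #|T| ->
  num_adj_cotriangles e x <= 'C(k, 2) * (#|T| - 2 * k) + 'C(k, 3) /\
  (num_adj_cotriangles e x = 'C(k, 2) * (#|T| - 2 * k) + 'C(k, 3) ->
   iso_Kkk e (component e x) k).
Proof.
move=> [e_sym e_irr] k_gt0 e_reg n_ge; have kn : 3 * k <= #|T| by lia.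
set N := nbhd e x; set inN := [set S : {set T} | S \subset N].
rewrite /num_adj_cotriangles -/(adj_cotriangles e x) -(cardsID inN).
set inner := #|_ :&: _|; set outer := #|_ :\: _|.
have inner_le : inner <= 'C(k, 3).
  rewrite -(e_reg x); apply: leq_trans (card_cotriangles_sub e N).
  by apply: subset_leq_card; apply/subsetP => S; rewrite !inE => /andP[/andP[-> _] ->].
have outer2_le := double_card_split_cotriangles e_sym x.
have sum_le := leqif_sum (card_split_cotriples_at_leqif e_irr e_reg (x := x) kn).
have sum_max : \sum_(a in N) (k - 1) * (#|T| - 2 * k) = 'C(k, 2) * (#|T| - 2 * k) * 2.
  have bin2_double : 'C(k, 2) * 2 = k * (k - 1) by rewrite mulnC mul_bin_left bin1 mulnC.
  by rewrite sum_nat_const (e_reg x) mulnA -bin2_double mulnAC.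
rewrite card_split_cotriples -/N -/inN -/outer sum_max in outer2_le sum_le.
split=> [|extremal].
  rewrite addnC leq_add // -(leq_pmul2r (isT : 0 < 2)).
  exact: leq_trans outer2_le (leq_of_leqif sum_le).
have outer2_ge : 'C(k, 2) * (#|T| - 2 * k) * 2 <= outer * 2.
  by rewrite leq_pmul2r // -(leq_add2l inner) extremal addnC leq_add2l.
have := eq_leqif sum_le.
rewrite eqn_leq (leq_of_leqif sum_le) (leq_trans outer2_ge outer2_le) /=.
move/esym/forall_inP/(twin_nbhds_of_extremal e_reg) => [indN twinN].
exact: iso_Kkk_of_twin_nbhds.
Qed.
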